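(* Let $m, n, k, l, t, r$ be positive integers satisfying $k\geq l \geq t+r$ and $\min\{m, n\}\geq k+l-t+2$. Let $T$ be a $(t+2r)$-element subset of $[\min\{m,n\}]$ and fix $j\in [\min\{m,n\}]\setminus T$. For any $A\in \binom{[n]\setminus (T\cup \{j\})}{k-r-t}$ and $B \in \binom{[m]\setminus (T\cup \{j\})}{l-r-t}$ with $|A\cap B|=w$, there exist $A_1, A_2, \ldots, A_{w+1} \in \binom{[n]\setminus (T\cup \{j\})}{k-r-t}$ and $B_1, B_2, \ldots, B_{w+1} \in \binom{[m]\setminus (T\cup \{j\})}{l-r-t}$ such that (1) $A_i \cap B_i=\emptyset$ for $i=1,\ldots, w+1$; (2) $A_{i+1} \cap B_i=\emptyset$ for $i=1,\ldots, w$; (3) $A_1=A$ and $B_{w+1}=B$.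
   Context: $[n]=\{1,\dots,n\}$ and $\binom{D}{k}$ denotes the family of all $k$-element subsets of a finite set $D$. *)

From mathcomp Require Import all_boot.
From mathcomp Require Export finmap.
Set Implicit Arguments. Unset Strict Implicit. Unset Printing Implicit Defensive.
Local Open Scope fset_scope.

Definition range1 (n : nat) : {fset nat} := [fset i | i in iota 1 n].

Definition in_binom (D : {fset nat}) (k : nat) (S : {fset nat}) : bool :=
  (S `<=` D) && (#|` S| == k).

From mathcomp Require Import all_boot.
From mathcomp Require Import finmap.
From mathcomp Require Import zify.

Set Implicit Arguments.
Unset Strict Implicit.
Unset Printing Implicit Defensive.
Local Open Scope fset_scope.

(* Induction on w = |A ∩ B|.  If w > 0, trade a common element x of A and B
   for a point y of the n-side ground set outside A ∪ B: the set
   A' = (A \ x) ∪ {y} meets B in w - 1 points.  As B_1 take any (l-r-t)-subset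
   of the m-side ground set avoiding A ∪ {y}, hence avoiding both A and A', and
   continue the chain from A' and B.  The hypothesis on min{m, n} makes both
   ground sets, of size at least k + l - 2(r + t) + 1, large enough for y and B_1
   to exist. *)

Section DisjointChain.
Variable K : choiceType.
Implicit Types (D Dn Dm X A B : {fset K}) (x y : K).

Lemma exists_fsubset_card X b : b <= #|` X| ->
  exists2 S : {fset K}, S `<=` X & #|` S| = b.
Proof.
move=> leb; exists [fset x in take b (enum_fset X)].
  by apply/fsubsetP=> x; rewrite in_fset /= => /mem_take.
rewrite card_fseq undup_id ?size_take; last exact/take_uniq/fset_uniq.
by case: ltnP => // ?; apply/eqP; rewrite eqn_leq leb andbT.
Qed.

Lemma leq_subn_cardfsD D X : #|` D| - #|` X| <= #|` D `\` X|.
Proof. by rewrite cardfsD leq_sub2l // fsubset_leq_card // fsubsetIr. Qed.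

Lemma fsubset_exchange D A x y : A `<=` D -> y \in D -> y |` (A `\ x) `<=` D.
Proof.
by move=> AD yD; rewrite fsubUset fsub1set yD (fsubset_trans (fsubsetDl _ _)).
Qed.

Lemma card_exchange A x y : x \in A -> y \notin A -> #|` y |` (A `\ x)| = #|` A|.
Proof.
move=> xA yA; rewrite cardfsU1 (cardfsD1 x A) xA !inE (negbTE yA) andbF.
by rewrite add1n.
Qed.

Lemma fsetI_exchange A B x y : y \notin B -> (y |` (A `\ x)) `&` B = (A `&` B) `\ x.
Proof.
move=> yB; apply/fsetP=> z; rewrite !inE.
by case: eqP => [->|_] /=; rewrite ?(negbTE yB) ?andbF // andbA.
Qed.

(* The membership clause is [in_binom] unfolded, so that at [K = nat] this is
   the conclusion of [lemma4p3] up to conversion. *)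
Definition disjoint_chain Dn Dm a b w A B :=
  exists As Bs : nat -> {fset K},
    (forall i, 1 <= i <= w.+1 ->
       ((As i `<=` Dn) && (#|` As i| == a)) /\ ((Bs i `<=` Dm) && (#|` Bs i| == b))) /\
    (forall i, 1 <= i <= w.+1 -> As i `&` Bs i = fset0) /\
    (forall i, 1 <= i <= w -> As i.+1 `&` Bs i = fset0) /\
    As 1 = A /\ Bs w.+1 = B.

Lemma disjoint_chain0 Dn Dm a b A B :
  A `<=` Dn -> #|` A| = a -> B `<=` Dm -> #|` B| = b -> [disjoint A & B] ->
  disjoint_chain Dn Dm a b 0 A B.
Proof.
move=> AD cA BD cB /disjoint_fsetI0 AB0.
by exists (fun=> A), (fun=> B); do ?split; rewrite ?AD ?BD ?cA ?cB ?eqxx.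
Qed.

Lemma disjoint_chainS Dn Dm a b w A A2 B1 B :
  A `<=` Dn -> #|` A| = a -> B1 `<=` Dm -> #|` B1| = b ->
  [disjoint A & B1] -> [disjoint A2 & B1] ->
  disjoint_chain Dn Dm a b w A2 B -> disjoint_chain Dn Dm a b w.+1 A B.
Proof.
move=> AD cA B1D cB1 /disjoint_fsetI0 AB1 /disjoint_fsetI0 A2B1.
move=> [As [Bs [inD [disj [disjS [As1 BsE]]]]]].
exists (fun i => if i <= 1 then A else As i.-1),
       (fun i => if i <= 1 then B1 else Bs i.-1).
split; [|split; [|split]]; last by [].
- by case=> [|[|i]] //= ilt; [rewrite AD B1D cA cB1 !eqxx | exact: inD].
- by case=> [|[|i]] //= ilt; exact: disj.
- by case=> [|[|i]] //= ilt; [rewrite As1 | exact: (disjS i.+1)].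
Qed.

Lemma disjoint_chain_exists Dn Dm a b w A B :
  a + b <= #|` Dn| -> a + b < #|` Dm| -> B `<=` Dm -> #|` B| = b ->
  A `<=` Dn -> #|` A| = a -> #|` A `&` B| = w ->
  disjoint_chain Dn Dm a b w A B.
Proof.
move=> cDn cDm BD cB; elim: w A => [|w IH] A AD cA cAB.
  apply: disjoint_chain0 => //; rewrite -fsetI_eq0 -cardfs_eq0; exact/eqP.
have [x xAB] : exists x, x \in A `&` B by apply/fset0Pn; rewrite -cardfs_eq0 cAB.
have [y yD] : exists y, y \in Dn `\` (A `|` B).
  apply/fset0Pn; rewrite -cardfs_eq0 -lt0n.
  have := leq_subn_cardfsD Dn (A `|` B); have := cardfsUI A B; lia.
move: xAB yD; rewrite !inE negb_or => /andP[xA xB] /andP[/andP[yA yB] yDn].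
have [B1 B1D cB1] : exists2 B1, B1 `<=` Dm `\` (y |` A) & #|` B1| = b.
  apply: exists_fsubset_card; apply: leq_trans (leq_subn_cardfsD _ _).
  by rewrite cardfsU1 yA cA; lia.
move: B1D; rewrite fsubsetD fdisjoint_sym => /andP[B1Dm B1yA].
apply: (disjoint_chainS (A2 := y |` (A `\ x)) (B1 := B1)) => //.
- by apply: fdisjointWl B1yA; apply: fsubsetU1.
- by apply: fdisjointWl B1yA; apply/fsetUS/fsubsetDl.
apply: IH; rewrite ?card_exchange ?fsubset_exchange //.
rewrite fsetI_exchange //; have := cardfsD1 x (A `&` B).
by rewrite inE xA xB cAB; lia.
Qed.

End DisjointChain.

Lemma card_range1 n : #|` range1 n| = n.
Proof. by rewrite card_fseq undup_id ?iota_uniq // size_iota. Qed.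

Lemma fsubset_range1 p q : p <= q -> range1 p `<=` range1 q.
Proof. by move=> le_pq; apply/fsubsetP=> i; rewrite !in_fset /= !mem_iota; lia. Qed.

Lemma card_range1D p q (T : {fset nat}) j : q <= p ->
  T `<=` range1 q -> j \in range1 q -> j \notin T ->
  #|` range1 p `\` (T `|` [fset j])| = p - (#|` T| + 1).
Proof.
move=> /fsubset_range1 le_qp Tq jq jT.
rewrite cardfsDS; last by rewrite fsubUset (fsubset_trans Tq) // fsub1set (fsubsetP le_qp).
by rewrite card_range1 fsetUC cardfsU1 jT addnC.
Qed.

Theorem lemma4p3 (m n k l t r : nat) (T : {fset nat}) (j : nat)
  (A B : {fset nat}) (w : nat) :
  0 < m -> 0 < n -> 0 < k -> 0 < l -> 0 < t -> 0 < r ->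
  l <= k -> t + r <= l ->
  k + l - t + 2 <= minn m n ->
  T `<=` range1 (minn m n) -> #|` T| = (t + 2 * r)%N ->
  j \in range1 (minn m n) -> j \notin T ->
  in_binom (range1 n `\` (T `|` [fset j])) (k - r - t) A ->
  in_binom (range1 m `\` (T `|` [fset j])) (l - r - t) B ->
  #|` (A `&` B)| = w ->
  exists As Bs : nat -> {fset nat},
    (forall i, 1 <= i <= w.+1 ->
       in_binom (range1 n `\` (T `|` [fset j])) (k - r - t) (As i) /\
       in_binom (range1 m `\` (T `|` [fset j])) (l - r - t) (Bs i)) /\
    (forall i, 1 <= i <= w.+1 -> As i `&` Bs i = fset0) /\
    (forall i, 1 <= i <= w -> As i.+1 `&` Bs i = fset0) /\
    As 1 = A /\ Bs w.+1 = B.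
Proof.
move=> _ _ _ _ _ _ le_lk le_trl le_min Tmin cT jmin jT.
move=> /andP[AD /eqP cA] /andP[BD /eqP cB] cAB.
have cardD p : minn m n <= p -> #|` range1 p `\` (T `|` [fset j])| = p - (t + 2 * r + 1).
  by move=> le_min_p; rewrite (card_range1D le_min_p Tmin jmin jT) cT.
apply: disjoint_chain_exists => //; rewrite cardD ?geq_minl ?geq_minr //; lia.
Qed.
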